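(* For $t\ge 0$ let $T_t:=e^{t(x\partial_x)^3}:\mathbb{R}[x]_{\leq 4}\to\mathbb{R}[x]_{\leq 4}$, i.e. $a_0+a_1x+a_2x^2+a_3x^3+a_4x^4\mapsto a_0+a_1e^tx+a_2e^{8t}x^2+a_3e^{27t}x^3+a_4e^{64t}x^4$. Then there exists a constant $\tau\in\mathbb{R}$ with $1.19688\cdot 10^{-2}<\tau<1.19689\cdot 10^{-2}$ such that (i) $T_t$ is not a positivity preserver for any $t\in(0,\tau)$, and (ii) $T_t$ is a positivity preserver for $t=0$ and for all $t\geq\tau$. In particular $(e^{t(x\partial_x)^3})_{t\ge0}$ on $\mathbb{R}[x]_{\le 4}$ is an eventually positive semi-group.
   Context: $\mathbb{R}[x]_{\le 4}$ denotes real univariate polynomials of degree at most $4$. Here ''$T_t$ is a positivity preserver'' means $T_t$ maps every polynomial $p\in\mathbb{R}[x]_{\le 4}$ with $p\ge 0$ on $\mathbb{R}$ to a polynomial that is $\ge 0$ on $\mathbb{R}$. A semi-group $(e^{tA})_{t\ge0}$ is called eventually positive if $e^{tA}$ is positive for all $t\ge\tau$ for some $\tau>0$ but not for $t\in(0,\tau)$. *)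

From Stdlib Require Import Reals.
Open Scope R_scope.

(* A polynomial p in R[x]_{<=4} is represented by its coefficient vector
   (a 0, ..., a 4); coefficients a k for k > 4 are ignored. *)
Definition poly4 := nat -> R.

Definition eval4 (a : poly4) (x : R) : R :=
  sum_f_R0 (fun k => a k * x ^ k) 4.

Definition nonneg4 (a : poly4) : Prop := forall x : R, 0 <= eval4 a x.

Definition T (t : R) (a : poly4) : poly4 :=
  fun k => a k * exp (INR (k ^ 3) * t).

Definition positivity_preserver (t : R) : Prop :=
  forall a : poly4, nonneg4 a -> nonneg4 (T t a).

(* With s = e^t, (T_t p)(x) = sum_k a_k s^(k^3) x^k is the value at p of the linear
   functional L with L(x^k) = l_k := s^(k^3) x^k.  Every nonnegative quartic is a sum of
   squares of quadratics (expand it around a global minimiser), so T_t preserves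
   positivity as soon as the Hankel matrix (l_(i+j))_(i,j<=2) is positive semidefinite.
   Up to rescaling this is the Hankel matrix of (1, s, s^8, s^27, s^64): its leading
   minors are positive for s > 1 and its determinant is s^24 (s^6 - 1)^2 k(s^6) with
   k(u) = u^6 + u^5 + u^4 - u^2 - 2u - 1.  When the determinant is negative, the square of
   the quadratic given by the first adjugate column is a nonnegative p with
   (T_t p)(1) < 0.  As k increases on [1, oo), tau = ln(u)/6 for the root u of k, which
   is located numerically by Taylor bounds on exp. *)

From Stdlib Require Import Factorial Reals Lra Psatz Lia.
From Coquelicot Require Import Coquelicot.
Open Scope R_scope.

Lemma continuity_pt_nonneg_0 (g : R -> R) :
  continuity_pt g 0 -> (forall h, 0 < h -> 0 <= g h) -> 0 <= g 0.
Proof.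
  intros Hc Hpos.
  destruct (Rle_or_lt 0 (g 0)) as [|Hneg]; [assumption|exfalso].
  destruct (Hc (- g 0)) as [d [Hd Hball]]; [lra|].
  assert (Hclose : Rabs (g (d / 2) - g 0) < - g 0).
  { apply (Hball (d / 2)); split; [split; [exact I | lra]|].
    simpl; unfold R_dist; rewrite Rminus_0_r, Rabs_right; lra. }
  pose proof (Hpos (d / 2) ltac:(lra)).
  pose proof (Rle_abs (g (d / 2) - g 0)); lra.
Qed.

Lemma quadratic_nonneg_discr (a b c : R) :
  0 < c -> (forall h, 0 <= a + b * h + c * h ^ 2) -> b ^ 2 <= 4 * a * c.
Proof.
  intros Hc Hq.
  assert (Hvertex : a + b * (- b / (2 * c)) + c * (- b / (2 * c)) ^ 2
                    = (4 * a * c - b ^ 2) / (4 * c)) by (field; lra).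
  pose proof (Hq (- b / (2 * c))) as Hmin; rewrite Hvertex in Hmin.
  assert (Hscaled : 0 <= (4 * a * c - b ^ 2) / (4 * c) * (4 * c))
    by (apply Rmult_le_pos; lra).
  field_simplify in Hscaled; lra.
Qed.

(* v^T H v for the Hankel matrix H = (l_(i+j)); equivalently L((v0 + v1 x + v2 x^2)^2)
   for the functional L(x^k) = l_k. *)
Definition hankel_form (l0 l1 l2 l3 l4 v0 v1 v2 : R) : R :=
  l0 * v0 ^ 2 + 2 * l1 * v0 * v1 + l2 * (v1 ^ 2 + 2 * v0 * v2)
  + 2 * l3 * v1 * v2 + l4 * v2 ^ 2.

Definition hankel_det (l0 l1 l2 l3 l4 : R) : R :=
  l0 * l2 * l4 + 2 * l1 * l2 * l3 - l2 ^ 3 - l1 ^ 2 * l4 - l0 * l3 ^ 2.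

Lemma hankel_form_nonneg (l0 l1 l2 l3 l4 v0 v1 v2 : R) :
  0 < l0 -> 0 < l0 * l2 - l1 ^ 2 -> 0 <= hankel_det l0 l1 l2 l3 l4 ->
  0 <= hankel_form l0 l1 l2 l3 l4 v0 v1 v2.
Proof.
  intros Hl0 Hminor Hdet.
  set (m := l0 * l2 - l1 ^ 2) in *.
  assert (Hsq : l0 * m * hankel_form l0 l1 l2 l3 l4 v0 v1 v2 =
     m * (l0 * v0 + l1 * v1 + l2 * v2) ^ 2 + (m * v1 + (l0 * l3 - l1 * l2) * v2) ^ 2
     + l0 * hankel_det l0 l1 l2 l3 l4 * v2 ^ 2)
    by (unfold m, hankel_form, hankel_det; ring).
  assert (0 <= l0 * m * hankel_form l0 l1 l2 l3 l4 v0 v1 v2).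
  { rewrite Hsq.
    pose proof (pow2_ge_0 (l0 * v0 + l1 * v1 + l2 * v2)).
    pose proof (pow2_ge_0 (m * v1 + (l0 * l3 - l1 * l2) * v2)).
    pose proof (pow2_ge_0 v2).
    assert (0 <= l0 * hankel_det l0 l1 l2 l3 l4) by nra.
    nra. }
  assert (0 < l0 * m) by nra.
  nra.
Qed.

Lemma hankel_form_adjugate (l0 l1 l2 l3 l4 : R) :
  hankel_form l0 l1 l2 l3 l4
    (l2 * l4 - l3 ^ 2) (l2 * l3 - l1 * l4) (l1 * l3 - l2 ^ 2)
  = hankel_det l0 l1 l2 l3 l4 * (l2 * l4 - l3 ^ 2).
Proof. unfold hankel_form, hankel_det; ring. Qed.

Definition quartic (a0 a1 a2 a3 a4 x : R) : R :=
  a0 + a1 * x + a2 * x ^ 2 + a3 * x ^ 3 + a4 * x ^ 4.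

Lemma quartic_nonneg_lead_ge0 (a0 a1 a2 a3 a4 : R) :
  (forall x, 0 <= quartic a0 a1 a2 a3 a4 x) -> 0 <= a4.
Proof.
  intros Hp.
  set (g h := a0 * h ^ 4 + a1 * h ^ 3 + a2 * h ^ 2 + a3 * h + a4).
  replace a4 with (g 0) by (unfold g; ring).
  apply continuity_pt_nonneg_0; [unfold g; reg|].
  intros h Hh.
  replace (g h) with (h ^ 4 * quartic a0 a1 a2 a3 a4 (/ h))
    by (unfold g, quartic; field; lra).
  pose proof (Hp (/ h)); pose proof (pow_lt h 4 Hh); nra.
Qed.

Lemma quartic_ge_coef0_large (a0 a1 a2 a3 a4 x : R) : 0 < a4 ->
  1 + (Rabs a1 + Rabs a2 + Rabs a3) / a4 <= Rabs x ->
  a0 <= quartic a0 a1 a2 a3 a4 x.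
Proof.
  intros Ha4 Hx.
  set (S := Rabs a1 + Rabs a2 + Rabs a3) in *.
  set (y := Rabs x) in *.
  assert (0 <= S) by (pose proof (Rabs_pos a1); pose proof (Rabs_pos a2);
                     pose proof (Rabs_pos a3); unfold S; lra).
  assert (0 <= S / a4) by (apply Rdiv_le_0_compat; lra).
  assert (HS : S + a4 <= a4 * y).
  { replace (S + a4) with (a4 * (1 + S / a4)) by (field; lra).
    apply Rmult_le_compat_l; lra. }
  assert (Hy1 : 1 <= y) by lra.
  assert (Habs : forall c k, - (Rabs c * y ^ k) <= c * x ^ k).
  { intros c k. unfold y; rewrite RPow_abs, <- Rabs_mult.
    pose proof (Rle_abs (- (c * x ^ k))); rewrite Rabs_Ropp in *; lra. }
  assert (Hx4 : x ^ 4 = y ^ 4).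
  { unfold y; rewrite RPow_abs, Rabs_right; [reflexivity|].
    pose proof (pow2_ge_0 (x ^ 2)); lra. }
  pose proof (Habs a1 1%nat); pose proof (Habs a2 2%nat); pose proof (Habs a3 3%nat).
  pose proof (Rabs_pos a1); pose proof (Rabs_pos a2); pose proof (Rabs_pos a3).
  assert (y <= y ^ 3) by nra. assert (y ^ 2 <= y ^ 3) by nra.
  assert ((S + a4) * y ^ 3 <= a4 * y ^ 4) by nra.
  unfold quartic; rewrite Hx4. unfold S in *. nra.
Qed.

Lemma quartic_attains_min (a0 a1 a2 a3 a4 : R) : 0 < a4 ->
  exists x0, forall x, quartic a0 a1 a2 a3 a4 x0 <= quartic a0 a1 a2 a3 a4 x.
Proof.
  intros Ha4.
  set (M := 1 + (Rabs a1 + Rabs a2 + Rabs a3) / a4).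
  assert (HM : 1 <= M).
  { pose proof (Rabs_pos a1); pose proof (Rabs_pos a2); pose proof (Rabs_pos a3).
    assert (0 <= (Rabs a1 + Rabs a2 + Rabs a3) / a4) by (apply Rdiv_le_0_compat; lra).
    unfold M; lra. }
  destruct (continuity_ab_min (quartic a0 a1 a2 a3 a4) (- M) M) as [x0 [Hmin _]];
    [lra | intros c _; unfold quartic; reg |].
  exists x0; intros x.
  destruct (Rle_or_lt (Rabs x) M) as [Hx | Hx].
  - apply Hmin; apply Rabs_le_between; exact Hx.
  - apply (Rle_trans _ (quartic a0 a1 a2 a3 a4 0)); [apply Hmin; lra|].
    replace (quartic a0 a1 a2 a3 a4 0) with a0 by (unfold quartic; ring).
    apply quartic_ge_coef0_large; unfold M in Hx; lra.
Qed.

Lemma quartic_nonneg_coef1_eq0 (e1 e2 e3 e4 : R) :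
  (forall h, 0 <= quartic 0 e1 e2 e3 e4 h) -> e1 = 0.
Proof.
  intros Hp.
  set (g h := e1 + e2 * h + e3 * h ^ 2 + e4 * h ^ 3).
  assert (Hg : forall h, quartic 0 e1 e2 e3 e4 h = h * g h)
    by (intros; unfold quartic, g; ring).
  assert (Hcont : continuity g) by (unfold g; reg).
  assert (Hright : 0 <= g 0).
  { apply continuity_pt_nonneg_0; [apply Hcont|].
    intros h Hh; pose proof (Hp h); rewrite Hg in *; nra. }
  assert (Hleft : 0 <= - g (- 0)).
  { apply (continuity_pt_nonneg_0 (fun h => - g (- h))); [reg; apply Hcont|].
    intros h Hh; pose proof (Hp (- h)); rewrite Hg in *; nra. }
  rewrite Ropp_0 in Hleft; unfold g in *; lra.
Qed.

Lemma quartic_nonneg_discr (e2 e3 e4 : R) : 0 < e4 ->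
  (forall h, 0 <= quartic 0 0 e2 e3 e4 h) -> e3 ^ 2 <= 4 * e2 * e4.
Proof.
  intros He4 Hp.
  set (q h := e2 + e3 * h + e4 * h ^ 2).
  assert (Hq : forall h, h <> 0 -> 0 <= q h).
  { intros h Hh.
    assert (0 < h ^ 2) by (apply pow2_gt_0; exact Hh).
    assert (quartic 0 0 e2 e3 e4 h = h ^ 2 * q h) by (unfold quartic, q; ring).
    pose proof (Hp h); nra. }
  assert (Hq0 : 0 <= q 0)
    by (apply continuity_pt_nonneg_0; [unfold q; reg | intros h Hh; apply Hq; lra]).
  apply quadratic_nonneg_discr; [exact He4|].
  intros h; destruct (Req_dec h 0) as [->|Hh]; [exact Hq0 | exact (Hq h Hh)].
Qed.

Section HankelFunctional.

Variables l0 l1 l2 l3 l4 : R.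
Hypothesis hankel_psd : forall v0 v1 v2, 0 <= hankel_form l0 l1 l2 l3 l4 v0 v1 v2.

Lemma hankel_functional_nonneg_lead_pos (a0 a1 a2 a3 a4 : R) : 0 < a4 ->
  (forall x, 0 <= quartic a0 a1 a2 a3 a4 x) ->
  0 <= a0 * l0 + a1 * l1 + a2 * l2 + a3 * l3 + a4 * l4.
Proof.
  intros Ha4 Hp.
  destruct (quartic_attains_min a0 a1 a2 a3 a4 Ha4) as [x0 Hmin].
  set (e1 := a1 + 2 * a2 * x0 + 3 * a3 * x0 ^ 2 + 4 * a4 * x0 ^ 3).
  set (e2 := a2 + 3 * a3 * x0 + 6 * a4 * x0 ^ 2).
  set (e3 := a3 + 4 * a4 * x0).
  assert (Hshift : forall h, quartic a0 a1 a2 a3 a4 (x0 + h) - quartic a0 a1 a2 a3 a4 x0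
                             = quartic 0 e1 e2 e3 a4 h)
    by (intros; unfold quartic, e1, e2, e3; ring).
  assert (He1 : e1 = 0).
  { apply (quartic_nonneg_coef1_eq0 e1 e2 e3 a4); intros h.
    rewrite <- Hshift; pose proof (Hmin (x0 + h)); lra. }
  assert (Hdiscr : e3 ^ 2 <= 4 * e2 * a4).
  { apply quartic_nonneg_discr; [exact Ha4|]; intros h.
    pose proof (Hshift h) as Hh; rewrite He1 in Hh.
    rewrite <- Hh; pose proof (Hmin (x0 + h)); lra. }
  (* Around the minimiser, p = p(x0) + a4 ((x - x0) (x - x0 + c))^2 + K (x - x0)^2
     with c = e3 / (2 a4) and K = (4 e2 a4 - e3^2) / (4 a4) >= 0. *)
  set (c := e3 / (2 * a4)).
  set (K := (4 * e2 * a4 - e3 ^ 2) / (4 * a4)).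
  assert (HK : 0 <= K) by (apply Rdiv_le_0_compat; lra).
  assert (Ha1 : a1 = - (2 * a2 * x0 + 3 * a3 * x0 ^ 2 + 4 * a4 * x0 ^ 3))
    by (unfold e1 in He1; lra).
  assert (Hsos : a0 * l0 + a1 * l1 + a2 * l2 + a3 * l3 + a4 * l4 =
     quartic a0 a1 a2 a3 a4 x0 * l0
     + a4 * hankel_form l0 l1 l2 l3 l4 (x0 ^ 2 - c * x0) (c - 2 * x0) 1
     + K * hankel_form l0 l1 l2 l3 l4 (- x0) 1 0).
  { unfold quartic, hankel_form, K, c, e2, e3; rewrite Ha1; field; lra. }
  rewrite Hsos.
  assert (0 <= l0) by (pose proof (hankel_psd 1 0 0); unfold hankel_form in *; lra).
  pose proof (hankel_psd (x0 ^ 2 - c * x0) (c - 2 * x0) 1).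
  pose proof (hankel_psd (- x0) 1 0).
  pose proof (Hp x0).
  assert (0 <= quartic a0 a1 a2 a3 a4 x0 * l0) by (apply Rmult_le_pos; lra).
  assert (0 <= a4 * hankel_form l0 l1 l2 l3 l4 (x0 ^ 2 - c * x0) (c - 2 * x0) 1)
    by (apply Rmult_le_pos; lra).
  assert (0 <= K * hankel_form l0 l1 l2 l3 l4 (- x0) 1 0) by (apply Rmult_le_pos; lra).
  lra.
Qed.

Lemma hankel_functional_nonneg (a0 a1 a2 a3 a4 : R) :
  (forall x, 0 <= quartic a0 a1 a2 a3 a4 x) ->
  0 <= a0 * l0 + a1 * l1 + a2 * l2 + a3 * l3 + a4 * l4.
Proof.
  intros Hp.
  destruct (quartic_nonneg_lead_ge0 _ _ _ _ _ Hp) as [Ha4 | <-].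
  - exact (hankel_functional_nonneg_lead_pos a0 a1 a2 a3 a4 Ha4 Hp).
  - (* perturb p to p + eps x^4 and let eps -> 0 *)
    set (g eps := a0 * l0 + a1 * l1 + a2 * l2 + a3 * l3 + eps * l4).
    replace (a0 * l0 + a1 * l1 + a2 * l2 + a3 * l3 + 0 * l4) with (g 0) by reflexivity.
    apply continuity_pt_nonneg_0; [unfold g; reg|].
    intros eps Heps; apply hankel_functional_nonneg_lead_pos; [exact Heps|].
    intros x; pose proof (Hp x); pose proof (pow2_ge_0 (x ^ 2)).
    unfold quartic in *; nra.
Qed.

End HankelFunctional.

Lemma exp_INR_mul (n : nat) (t : R) : exp (INR n * t) = exp t ^ n.
Proof.
  induction n as [|n IH]; [rewrite Rmult_0_l; apply exp_0|].
  rewrite S_INR, Rmult_plus_distr_r, Rmult_1_l, exp_plus, IH, Rmult_comm; reflexivity.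
Qed.

Lemma eval4_quartic (a : poly4) (x : R) :
  eval4 a x = quartic (a 0%nat) (a 1%nat) (a 2%nat) (a 3%nat) (a 4%nat) x.
Proof. unfold eval4, quartic; simpl; ring. Qed.

Lemma eval4_T (t : R) (a : poly4) (x : R) :
  eval4 (T t a) x =
  a 0%nat * 1 + a 1%nat * (exp t * x) + a 2%nat * (exp t ^ 8 * x ^ 2)
  + a 3%nat * (exp t ^ 27 * x ^ 3) + a 4%nat * (exp t ^ 64 * x ^ 4).
Proof. rewrite eval4_quartic; unfold quartic, T; rewrite !exp_INR_mul; simpl; ring. Qed.

Lemma positivity_preserver_0 : positivity_preserver 0.
Proof.
  intros a Ha x; specialize (Ha x).
  rewrite eval4_T, exp_0, !pow1; rewrite eval4_quartic in Ha; unfold quartic in Ha; lra.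
Qed.

Definition det_factor (u : R) : R := u ^ 6 + u ^ 5 + u ^ 4 - u ^ 2 - 2 * u - 1.

Lemma hankel_det_moments (s : R) :
  hankel_det 1 s (s ^ 8) (s ^ 27) (s ^ 64) = s ^ 24 * (s ^ 6 - 1) ^ 2 * det_factor (s ^ 6).
Proof. unfold hankel_det, det_factor; ring. Qed.

Lemma det_factor_increasing (u w : R) : 1 <= u -> u < w -> det_factor u < det_factor w.
Proof.
  intros Hu Huw; unfold det_factor.
  assert (u ^ 6 <= w ^ 6) by (apply pow_incr; lra).
  assert (u ^ 5 <= w ^ 5) by (apply pow_incr; lra).
  assert (1 <= u ^ 2) by nra.
  assert (u ^ 2 < w ^ 2) by nra.
  assert (2 * (w ^ 2 - u ^ 2) <= w ^ 4 - u ^ 4) by nra.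
  assert (2 * (w - u) < w ^ 2 - u ^ 2) by nra.
  lra.
Qed.

Lemma moment_hankel_psd (s v0 v1 v2 : R) : 1 < s -> 0 <= det_factor (s ^ 6) ->
  0 <= hankel_form 1 s (s ^ 8) (s ^ 27) (s ^ 64) v0 v1 v2.
Proof.
  intros Hs Hk.
  assert (1 < s ^ 6) by (apply Rlt_pow_R1; [lra | lia]).
  assert (0 < s ^ 2) by (apply pow_lt; lra).
  apply hankel_form_nonneg; [lra | |].
  - replace (1 * s ^ 8 - s ^ 2) with (s ^ 2 * (s ^ 6 - 1)) by ring; nra.
  - rewrite hankel_det_moments.
    assert (0 < s ^ 24) by (apply pow_lt; lra).
    pose proof (pow2_ge_0 (s ^ 6 - 1)).
    apply Rmult_le_pos; [apply Rmult_le_pos|]; lra.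
Qed.

Lemma positivity_preserver_of_det_factor_nonneg (t : R) :
  0 < t -> 0 <= det_factor (exp t ^ 6) -> positivity_preserver t.
Proof.
  intros Ht Hk a Ha x.
  assert (Hs : 1 < exp t) by (rewrite <- exp_0; apply exp_increasing; exact Ht).
  rewrite eval4_T; apply hankel_functional_nonneg.
  - (* substituting v_k x^k for v_k reduces the moments at x to those at x = 1 *)
    intros v0 v1 v2.
    replace (hankel_form _ _ _ _ _ v0 v1 v2)
      with (hankel_form 1 (exp t) (exp t ^ 8) (exp t ^ 27) (exp t ^ 64) v0 (v1 * x) (v2 * x ^ 2))
      by (unfold hankel_form; ring).
    apply moment_hankel_psd; assumption.
  - intros y; rewrite <- eval4_quartic; apply Ha.
Qed.

Definition square_quadratic (v0 v1 v2 : R) : poly4 := fun k =>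
  match k with
  | 0%nat => v0 ^ 2
  | 1%nat => 2 * v0 * v1
  | 2%nat => v1 ^ 2 + 2 * v0 * v2
  | 3%nat => 2 * v1 * v2
  | 4%nat => v2 ^ 2
  | _ => 0
  end.

Lemma eval4_square_quadratic (v0 v1 v2 x : R) :
  eval4 (square_quadratic v0 v1 v2) x = (v0 + v1 * x + v2 * x ^ 2) ^ 2.
Proof. rewrite eval4_quartic; unfold quartic; simpl; ring. Qed.

Lemma not_positivity_preserver_of_det_factor_neg (t : R) :
  0 < t -> det_factor (exp t ^ 6) < 0 -> ~ positivity_preserver t.
Proof.
  intros Ht Hk Hpp.
  set (s := exp t) in *.
  assert (Hs : 1 < s) by (unfold s; rewrite <- exp_0; apply exp_increasing; exact Ht).
  (* the first column of the adjugate of the Hankel matrix of (1, s, s^8, s^27, s^64) *)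
  set (v0 := s ^ 8 * s ^ 64 - (s ^ 27) ^ 2).
  set (v1 := s ^ 8 * s ^ 27 - s * s ^ 64).
  set (v2 := s * s ^ 27 - (s ^ 8) ^ 2).
  assert (Hsq : nonneg4 (square_quadratic v0 v1 v2))
    by (intros x; rewrite eval4_square_quadratic; apply pow2_ge_0).
  pose proof (Hpp _ Hsq 1) as Hat1.
  replace (eval4 (T t (square_quadratic v0 v1 v2)) 1)
    with (hankel_det 1 s (s ^ 8) (s ^ 27) (s ^ 64) * v0) in Hat1
    by (rewrite eval4_T; fold s; cbn [square_quadratic]; unfold v0, v1, v2;
        rewrite <- hankel_form_adjugate; unfold hankel_form; ring).
  rewrite hankel_det_moments in Hat1.
  assert (1 < s ^ 6) by (apply Rlt_pow_R1; [lra | lia]).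
  assert (1 < s ^ 18) by (apply Rlt_pow_R1; [lra | lia]).
  assert (0 < s ^ 24) by (apply pow_lt; lra).
  assert (0 < s ^ 54) by (apply pow_lt; lra).
  assert (Hv0 : v0 = s ^ 54 * (s ^ 18 - 1)) by (unfold v0; ring).
  assert (0 < (s ^ 6 - 1) ^ 2) by (apply pow2_gt_0; lra).
  assert (0 < v0) by (rewrite Hv0; nra).
  assert (s ^ 24 * (s ^ 6 - 1) ^ 2 * det_factor (s ^ 6) < 0).
  { assert (0 < s ^ 24 * (s ^ 6 - 1) ^ 2) by nra. nra. }
  nra.
Qed.

Lemma exp_le_taylor (x : R) (n : nat) : 0 < x ->
  exp x * (1 - x ^ S n / INR (fact (S n)))
  <= sum_f_R0 (fun k => x ^ k / INR (fact k)) n.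
Proof.
  intros Hx.
  assert (Dexp : forall m y, Derive_n exp m y = exp y)
    by (intros; apply is_derive_n_unique, is_derive_n_exp).
  destruct (Taylor_Lagrange exp n 0 x Hx) as [z [[_ Hzx] Hexp]].
  { intros t _ [|k] _; [exact I|].
    apply (ex_derive_ext exp); [intros; symmetry; apply Dexp|].
    exists (exp t); apply is_derive_exp. }
  rewrite Dexp, Rminus_0_r in Hexp.
  rewrite (sum_eq _ (fun k => x ^ k / INR (fact k))) in Hexp
    by (intros; rewrite Dexp, exp_0; ring).
  assert (exp z <= exp x) by (left; apply exp_increasing; lra).
  assert (0 <= x ^ S n / INR (fact (S n)))
    by (apply Rdiv_le_0_compat; [apply pow_le; lra | apply lt_0_INR, lt_O_fact]).
  nra.
Qed.

Lemma exp_718128_le : exp (718128 / 10000000) <= 10744543 / 10000000.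
Proof.
  pose proof (exp_le_taylor (718128 / 10000000) 4 ltac:(lra)) as H.
  simpl in H. lra.
Qed.

Lemma exp_718134_ge : 10744547 / 10000000 <= exp (718134 / 10000000).
Proof.
  pose proof (exp_ge_taylor (718134 / 10000000) 4 ltac:(lra)) as H.
  simpl in H. lra.
Qed.

Lemma det_factor_root :
  exists u, 10744543 / 10000000 < u < 10744547 / 10000000 /\ det_factor u = 0.
Proof.
  assert (Hlo : det_factor (10744543 / 10000000) < 0) by (unfold det_factor; lra).
  assert (Hhi : 0 < det_factor (10744547 / 10000000)) by (unfold det_factor; lra).
  assert (Hcont : continuity det_factor) by (unfold det_factor; reg).
  destruct (IVT det_factor (10744543 / 10000000) (10744547 / 10000000) Hcont
               ltac:(lra) Hlo Hhi) as [u [[Hu_lo Hu_hi] Hu]].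
  exists u; split; [split | exact Hu].
  - destruct Hu_lo as [| <-]; [assumption | lra].
  - destruct Hu_hi as [| ->]; [assumption | lra].
Qed.

Lemma exp_pow6 (t : R) : exp t ^ 6 = exp (6 * t).
Proof. rewrite <- exp_INR_mul; f_equal; simpl; ring. Qed.

Theorem proposition6p1 :
  exists tau : R,
    119688 / 10000000 < tau < 119689 / 10000000 /\
    (forall t : R, 0 < t < tau -> ~ positivity_preserver t) /\
    positivity_preserver 0 /\
    (forall t : R, tau <= t -> positivity_preserver t).
Proof.
  destruct det_factor_root as [u [Hu_bounds Hu]].
  assert (Hln : 718128 / 10000000 < ln u < 718134 / 10000000).
  { pose proof exp_718128_le; pose proof exp_718134_ge.
    split; apply exp_lt_inv; rewrite exp_ln; lra. }
  exists (ln u / 6).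
  split; [lra | split; [| split; [exact positivity_preserver_0 |]]].
  - intros t [Ht Htau]; apply not_positivity_preserver_of_det_factor_neg; [exact Ht |].
    rewrite <- Hu, exp_pow6; apply det_factor_increasing.
    + pose proof (exp_ineq1_le (6 * t)); lra.
    + rewrite <- (exp_ln u) by lra; apply exp_increasing; lra.
  - intros t Htau; apply positivity_preserver_of_det_factor_nonneg; [lra |].
    rewrite <- Hu, exp_pow6.
    destruct (Rle_lt_or_eq_dec (ln u) (6 * t)) as [Hlt | Heq]; [lra | |].
    + left; apply det_factor_increasing; [lra |].
      rewrite <- (exp_ln u) by lra; apply exp_increasing; exact Hlt.
    + right; rewrite <- Heq, exp_ln by lra; reflexivity.
Qed.
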